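(* There exists a $(734,25)$-arc in $\operatorname{PG}(2,31)$; hence $m_{25}(2,31)\ge 734$.
   Context: Points of $\operatorname{PG}(2,q)$ are the 1-dimensional subspaces of $\operatorname{GF}(q)^3$, lines are the 2-dimensional subspaces. An $(n,r)$-arc in $\operatorname{PG}(2,q)$ is a set $\mathcal B$ of $n$ points such that every line contains at most $r$ points of $\mathcal B$ and at least one line contains exactly $r$ points of $\mathcal B$. $m_r(2,q)$ is the maximum $n$ for which an $(n,r)$-arc in $\operatorname{PG}(2,q)$ exists. *)

From HB Require Import structures.
From mathcomp Require Import all_boot all_order all_algebra all_field.
Set Implicit Arguments. Unset Strict Implicit. Unset Printing Implicit Defensive.
Import GRing.Theory.
Local Open Scope ring_scope.

(* A point (1-dim subspace of F^3) is represented by a nonzero row vector u,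
   standing for its row space <<u>>; a line (2-dim subspace) is represented by a
   2x3 matrix L of rank 2, standing for its row space.  A point set B is a set of nonzero vectors no two of
   which span the same subspace (so #|B| is the number of projective points). *)

Definition PG2_line (F : finFieldType) (L : 'M[F]_(2,3)) : bool := \rank L == 2.

Definition pts_on_line (F : finFieldType) (B : {set 'rV[F]_3}) (L : 'M[F]_(2,3))
  : nat := #|[set u in B | (u <= L)%MS]|.

Definition is_arc (F : finFieldType) (n r : nat) (B : {set 'rV[F]_3}) : Prop :=
  [/\ {in B, forall u : 'rV[F]_3, u != 0},
      {in B &, forall u v : 'rV[F]_3, (u == v)%MS -> u = v},
      #|B| = n,
      (forall L : 'M[F]_(2,3), PG2_line L -> pts_on_line B L <= r)%N &
      exists2 L : 'M[F]_(2,3), PG2_line L & pts_on_line B L = r].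

(* The arc is given explicitly by normalized homogeneous coordinates, and the
   arc conditions are reduced to finite computations on natural numbers:

   - over any field, a line of PG(2,K) (a rank-2 matrix L) is the kernel of a
     nonzero linear form c, which may be normalized so that its first nonzero
     coordinate is 1; then u lies on L iff u *m c^T = 0;
   - normalized vectors represent projective points faithfully: two of them
     spanning the same point are equal;
   - over a prime field 'F_p, normalized vectors are exactly the images of the
     p^2 + p + 1 triples in [proj_triples p], and incidence of the points and
     lines given by two triples is a divisibility test on their dot product;
   - hence (arc_criterion) a duplicate-free list of such triples with at most r
     points on every line of [proj_triples p] and exactly r points on the line
     z = 0 is an (n,r)-arc; for the arc of the paper these counts are checked by
     evaluation, with dot products computed in binary arithmetic. *)

(* NArith is loaded before MathComp so that the scope key %N keeps denoting nat. *)
From Stdlib Require Import NArith.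
From mathcomp Require Import all_boot all_order all_algebra all_field.
Set Implicit Arguments. Unset Strict Implicit. Unset Printing Implicit Defensive.
Import GRing.Theory.
Local Open Scope ring_scope.

Section Hyperplanes.
Variables (K : fieldType) (m n : nat).

Lemma hyperplane_normal (L : 'M[K]_(m, n.+1)) : \rank L = n ->
  exists2 c : 'rV[K]_n.+1, c != 0 & L *m c^T = 0.
Proof.
move=> rL; set Ker := kermx L^T.
have rKer : \rank Ker = 1%N by rewrite mxrank_ker mxrank_tr rL subSnn.
have [i Ker_i] : exists i, row i Ker != 0.
  apply/existsP; apply: contra_eqT rKer; rewrite negb_exists => /forallP rows0.
  suff ->: Ker = 0 by rewrite mxrank0.
  by apply/row_matrixP => i; rewrite row0; apply/eqP/negPn/rows0.
exists (row i Ker) => //.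
by rewrite -[L]trmxK -trmx_mul -row_mul mulmx_ker row0 trmx0.
Qed.

(* Conversely that hyperplane is exactly the kernel of any such form: both are
   n-dimensional and one contains the other. *)
Lemma sub_hyperplaneE (L : 'M[K]_(m, n.+1)) (c : 'rV[K]_n.+1) :
  \rank L = n -> c != 0 -> L *m c^T = 0 ->
  forall u : 'rV_n.+1, (u <= L)%MS = (u *m c^T == 0).
Proof.
move=> rL c0 Lc u; rewrite -sub_kermx.
have sLN : (L <= kermx c^T)%MS by rewrite sub_kermx Lc.
have rN : \rank (kermx c^T) = n by rewrite mxrank_ker mxrank_tr rank_rV c0 subn1.
have eqLN : (L == kermx c^T)%MS by rewrite -(mxrank_leqif_eq sLN) rL rN.
by apply/idP/idP => /submx_trans; apply; case/andP: eqLN.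
Qed.

End Hyperplanes.

Section NormalizedCoordinates.
Variable K : fieldType.
Implicit Types (u v w : 'rV[K]_3) (k : K).

Lemma rV3_eq u v : u 0 0 = v 0 0 -> u 0 1 = v 0 1 -> u 0 2 = v 0 2 -> u = v.
Proof.
move=> e0 e1 e2; apply/rowP => -[[|[|[|//]]] lt_j3].
- by rewrite (_ : Ordinal _ = 0) //; apply: val_inj.
- by rewrite (_ : Ordinal _ = 1) //; apply: val_inj.
- by rewrite (_ : Ordinal _ = 2) //; apply: val_inj.
Qed.

(* The canonical representative of a projective point (or line): its first
   nonzero coordinate is 1. *)
Definition normalized w : bool :=
  [|| w 0 0 == 1, (w 0 0 == 0) && (w 0 1 == 1) | [&& w 0 0 == 0, w 0 1 == 0 & w 0 2 == 1]].

Lemma normalized_neq0 w : normalized w -> w != 0.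
Proof. by apply: contraTneq => ->; rewrite /normalized !mxE [0 == 1]eq_sym oner_eq0 !andbF. Qed.

Lemma normalized_scale_eq k w w' : normalized w -> normalized w' -> w = k *: w' -> w = w'.
Proof.
move=> nw nw' wE; have k0 : k != 0.
  by apply: contraTneq (normalized_neq0 nw) => k0; rewrite wE k0 scale0r eqxx.
suff k1 : k = 1 by rewrite wE k1 scale1r.
move: nw; rewrite /normalized wE !mxE.
case/or3P: nw' => [/eqP-> | /andP[/eqP-> /eqP->] | /and3P[/eqP-> /eqP-> /eqP->]];
by rewrite ?mulr0 ?mulr1 ?eqxx ?(negbTE k0) ?(@eq_sym K 0 1) ?oner_eq0 /= ?orbF => /eqP.
Qed.

Lemma normalizeP v : v != 0 -> exists k w, [/\ k != 0, normalized w & v = k *: w].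
Proof.
have scaleK k : k != 0 -> v = k *: (k^-1 *: v) by move=> k0; rewrite scalerA divff ?scale1r.
move=> v0; case: (eqVneq (v 0 0) 0) => [v00|v00]; last first.
  exists (v 0 0), ((v 0 0)^-1 *: v); split; [by [] | | exact: scaleK].
  by rewrite /normalized !mxE mulVf ?eqxx.
case: (eqVneq (v 0 1) 0) => [v01|v01]; last first.
  exists (v 0 1), ((v 0 1)^-1 *: v); split; [by [] | | exact: scaleK].
  by rewrite /normalized !mxE v00 mulr0 mulVf ?eqxx ?orbT.
have v02 : v 0 2 != 0.
  by apply: contra_neq v0 => v02; apply: rV3_eq; rewrite ?mxE.
exists (v 0 2), ((v 0 2)^-1 *: v); split; [by [] | | exact: scaleK].
by rewrite /normalized !mxE v00 v01 mulr0 mulVf ?eqxx ?orbT.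
Qed.

Lemma line_normalized_normal m (L : 'M[K]_(m, 3)) : \rank L = 2 ->
  exists2 w, normalized w & forall u, (u <= L)%MS = (u *m w^T == 0).
Proof.
move=> rL; have [c c0 Lc] := hyperplane_normal rL.
have [k [w [k0 nw cE]]] := normalizeP c0.
exists w => //; apply: sub_hyperplaneE rL (normalized_neq0 nw) _.
by apply/eqP; move/eqP: Lc; rewrite cE linearZ /= -scalemxAr scaler_eq0 (negbTE k0).
Qed.

Lemma pid_mx2_normal w : w 0 0 = 0 -> w 0 1 = 0 -> pid_mx 2 *m w^T = 0 :> 'M[K]_(2, 1).
Proof.
move=> w0 w1; apply/matrixP => i j; rewrite !mxE (bigD1 2) //= big1.
  by rewrite !mxE (ltn_eqF (ltn_ord i)) mul0r addr0.
move=> k k2; rewrite !mxE ord1; case: k k2 => -[|[|[|//]]] lt_k3 k2.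
- by rewrite (_ : Ordinal lt_k3 = 0) ?w0 ?mulr0 //; apply: val_inj.
- by rewrite (_ : Ordinal lt_k3 = 1) ?w1 ?mulr0 //; apply: val_inj.
- by case/eqP: k2; apply: val_inj.
Qed.

End NormalizedCoordinates.

Definition triple := (nat * nat * nat)%type.

Definition dotn (s t : triple) : nat := (s.1.1 * t.1.1 + s.1.2 * t.1.2 + s.2 * t.2)%N.

Lemma N_mod_eq0 (x d : nat) : (0 < d)%N ->
  (N.of_nat x mod N.of_nat d =? 0)%num = (x %% d == 0)%N.
Proof.
move=> d_gt0; rewrite -Nat2N.inj_mod.
have -> : PeanoNat.Nat.modulo x d = (x %% d)%N.
  symmetry; apply: (PeanoNat.Nat.mod_unique _ _ (x %/ d)%N).
    by apply/ltP; rewrite ltn_pmod.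
  by rewrite multE plusE mulnC -divn_eq.
by apply/idP/eqP => [/N.eqb_spec /(Nat2N.inj _ 0) | ->].
Qed.

Section PrimeFieldCoordinates.
Variable p : nat.
Hypothesis p_pr : prime p.

Lemma Fp_val_lt (x : 'F_p) : (val x < p)%N.
Proof. by rewrite -[X in (_ < X)%N](Fp_cast p_pr) ltn_ord. Qed.

Lemma Fp_valK (x : 'F_p) : (val x)%:R = x.
Proof. by apply: val_inj; rewrite /= val_Fp_nat // modn_small // Fp_val_lt. Qed.

Lemma Fp_nat_eq0 n : ((n%:R : 'F_p) == 0) = (n %% p == 0)%N.
Proof. by rewrite -(inj_eq val_inj) /= val_Fp_nat. Qed.

Lemma Fp_val1 : nat_of_ord (1 : 'F_p) = 1%N.
Proof. by rewrite -(mulr1n 1) val_Fp_nat // modn_small // prime_gt1. Qed.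

Definition vec (t : triple) : 'rV['F_p]_3 :=
  \row_i (nth 0%N [:: t.1.1; t.1.2; t.2] i)%:R.

Definition coords (w : 'rV['F_p]_3) : triple := (w 0 0 : nat, w 0 1 : nat, w 0 2 : nat).

Lemma coordsK : cancel coords vec.
Proof. by move=> w; apply: rV3_eq; rewrite !mxE /= Fp_valK. Qed.

(* The p^2 + p + 1 normalized triples: (1,a,b), (0,1,b) and (0,0,1) with
   a, b < p.  They index both the points and the lines of PG(2,p). *)
Definition proj_triples : seq triple :=
  [seq (1, a, b)%N | a <- iota 0 p, b <- iota 0 p] ++
  [seq (0, 1, b)%N | b <- iota 0 p] ++ [:: (0, 0, 1)%N].

Lemma proj_triplesP t : t \in proj_triples ->
  [\/ exists a b, [/\ t = (1, a, b)%N, a < p & b < p]%N,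
      exists2 b, t = (0, 1, b)%N & (b < p)%N | t = (0, 0, 1)%N].
Proof.
rewrite !mem_cat mem_seq1 => /or3P[/allpairsP[[a b] [/=]] | /mapP[b] | /eqP ->].
- by rewrite !mem_iota => a_p b_p ->; apply: Or31; exists a, b.
- by rewrite mem_iota => b_p ->; apply: Or32; exists b.
- exact: Or33.
Qed.

Lemma vecK : {in proj_triples, cancel vec coords}.
Proof.
have p_gt1 := prime_gt1 p_pr.
move=> t /proj_triplesP[[a [b [-> a_p b_p]]] | [b -> b_p] | ->];
by rewrite /coords !mxE !val_Fp_nat //= !modn_small // ltnW.
Qed.

Lemma vec_normalized t : t \in proj_triples -> normalized (vec t).
Proof.
by move=> /proj_triplesP[[a [b [-> _ _]]] | [b -> _] | ->]; rewrite /normalized !mxE /= ?eqxx ?orbT.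
Qed.

Lemma coords_normalized w : normalized w -> coords w \in proj_triples.
Proof.
have in_iota (x : 'F_p) : (x : nat) \in iota 0 p by rewrite mem_iota Fp_val_lt.
rewrite /coords !mem_cat mem_seq1.
case/or3P => [/eqP-> | /andP[/eqP-> /eqP->] | /and3P[/eqP-> /eqP-> /eqP->]]; rewrite Fp_val1.
- by rewrite allpairs_f.
- by rewrite map_f ?orbT.
- by rewrite eqxx !orbT.
Qed.

Lemma vec_dotE s t : (vec s *m (vec t)^T == 0) = (dotn s t %% p == 0)%N.
Proof.
rewrite [_ *m _]mx11_scalar -scalemx1 scaler_eq0 (negbTE (matrix_nonzero1 _ _)) orbF.
rewrite !mxE !big_ord_recr big_ord0 /= !mxE /=.
by rewrite add0r -!natrM -!natrD Fp_nat_eq0.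
Qed.

Lemma line_normal_triple (L : 'M['F_p]_(2, 3)) : \rank L = 2 ->
  exists2 t, t \in proj_triples & forall u : 'rV_3, (u <= L)%MS = (u *m (vec t)^T == 0).
Proof.
move=> rL; have [w nw Lw] := line_normalized_normal rL.
by exists (coords w); [apply: coords_normalized | move=> u; rewrite coordsK].
Qed.

Definition dotN (s t : triple) : N :=
  (N.of_nat s.1.1 * N.of_nat t.1.1 + N.of_nat s.1.2 * N.of_nat t.1.2 +
   N.of_nat s.2 * N.of_nat t.2)%num.

Definition incident (t s : triple) : bool := (dotN s t mod N.of_nat p =? 0)%num.

Lemma incidentE t s : incident t s = (vec s *m (vec t)^T == 0).
Proof.
rewrite vec_dotE -N_mod_eq0 ?prime_gt0 //.
by rewrite /incident /dotN /dotn -!Nat2N.inj_mul -!Nat2N.inj_add.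
Qed.

Definition point_set (P : seq triple) : {set 'rV['F_p]_3} := [set u in map vec P].

Definition line_count (P : seq triple) (t : triple) : nat := count (incident t) P.

Lemma pts_on_line_count (P : seq triple) (L : 'M['F_p]_(2, 3)) t :
  uniq (map vec P) -> (forall u : 'rV_3, (u <= L)%MS = (u *m (vec t)^T == 0)) ->
  pts_on_line (point_set P) L = line_count P t.
Proof.
move=> uP Lt; rewrite /pts_on_line /line_count.
have -> : [set u in point_set P | (u <= L)%MS] = [set u in [seq u <- map vec P | (u <= L)%MS]].
  by apply/setP => u; rewrite !inE mem_filter andbC.
rewrite cardsE (card_uniqP (filter_uniq _ uP)) size_filter count_map.
by apply: eq_count => s; rewrite /= Lt incidentE.
Qed.

Lemma uniq_map_vec P : {subset P <= proj_triples} -> uniq P -> uniq (map vec P).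
Proof.
move=> sP uP; rewrite map_inj_in_uniq // => s t /sP sT /sP tT.
exact: (can_in_inj vecK).
Qed.

Lemma arc_criterion (P : seq triple) (n r : nat) :
  {subset P <= proj_triples} -> uniq P -> size P = n ->
  (forall t, t \in proj_triples -> line_count P t <= r)%N ->
  line_count P (0, 0, 1)%N = r ->
  is_arc n r (point_set P).
Proof.
move=> sP uP sizeP le_r eq_r; have uvP := uniq_map_vec sP uP.
split.
- by move=> u; rewrite inE => /mapP[s /sP sT ->]; apply/normalized_neq0/vec_normalized.
- move=> u v; rewrite !inE => /mapP[s /sP sT ->] /mapP[t /sP tT ->] /andP[/sub_rVP[k st] _].
  exact: normalized_scale_eq (vec_normalized sT) (vec_normalized tT) st.
- by rewrite cardsE (card_uniqP uvP) size_map.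
- move=> L /eqP rL; have [t tT Lt] := line_normal_triple rL.
  by rewrite (pts_on_line_count uvP Lt) le_r.
- exists (pid_mx 2); first by rewrite /PG2_line rank_pid_mx.
  rewrite -eq_r; apply: pts_on_line_count uvP _; apply: sub_hyperplaneE.
  + by rewrite rank_pid_mx.
  + by apply/normalized_neq0/vec_normalized; rewrite !mem_cat mem_seq1 eqxx !orbT.
  + by apply: pid_mx2_normal; rewrite mxE.
Qed.

End PrimeFieldCoordinates.

(* The arc B: row a of [affine_rows] lists the b with (1:a:b) in B, and
   [infinite_row] lists the b with (0:1:b) in B; moreover (0:0:1) is in B. *)
Definition affine_rows : seq (seq nat) := [::
  [:: 1; 2; 3; 6; 7; 8; 9; 11; 12; 13; 15; 18; 20; 21; 22; 23; 24; 25; 26; 27; 28; 29; 30];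
  [:: 0; 1; 2; 3; 4; 5; 6; 7; 8; 9; 11; 12; 13; 16; 20; 21; 22; 23; 25; 26; 27; 28; 29; 30];
  [:: 1; 2; 3; 4; 6; 7; 8; 11; 12; 13; 14; 15; 19; 20; 21; 22; 23; 24; 26; 27; 28; 30];
  [:: 0; 1; 2; 5; 6; 7; 8; 9; 11; 12; 13; 14; 15; 16; 18; 20; 21; 24; 25; 26; 28; 29; 30];
  [:: 0; 1; 2; 3; 4; 5; 6; 7; 9; 11; 12; 13; 15; 16; 19; 21; 22; 24; 25; 26; 27; 28; 29];
  [:: 0; 1; 2; 3; 4; 5; 6; 7; 8; 9; 11; 12; 14; 15; 16; 18; 20; 22; 23; 26; 27; 29; 30];
  [:: 0; 1; 2; 4; 6; 7; 8; 9; 11; 12; 13; 14; 16; 19; 21; 23; 24; 25; 26; 27; 28; 29; 30];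
  [:: 0; 1; 3; 4; 5; 6; 7; 8; 9; 11; 12; 14; 16; 18; 19; 20; 22; 24; 25; 26; 28; 29; 30];
  [:: 0; 1; 2; 3; 4; 5; 6; 7; 8; 9; 11; 12; 13; 14; 15; 16; 18; 19; 21; 25; 26; 27; 29; 30];
  [:: 0; 1; 3; 4; 6; 8; 9; 12; 13; 14; 15; 16; 18; 19; 20; 21; 22; 24; 26; 27; 28; 29; 30];
  [:: 2; 3; 4; 5; 6; 8; 9; 13; 14; 19; 20; 21; 22; 23; 27; 28; 29];
  [:: 0; 1; 2; 3; 4; 5; 6; 7; 8; 9; 11; 13; 14; 15; 16; 18; 19; 20; 21; 23; 24; 28; 29; 30];
  [:: 0; 2; 3; 4; 5; 7; 8; 9; 11; 12; 13; 14; 15; 16; 18; 19; 20; 22; 23; 24; 25; 27; 29];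
  [:: 0; 1; 2; 3; 4; 5; 6; 7; 8; 9; 12; 13; 14; 15; 18; 19; 20; 21; 23; 24; 25; 26; 28; 30];
  [:: 0; 1; 2; 3; 5; 6; 7; 8; 9; 12; 13; 14; 15; 16; 18; 19; 20; 22; 23; 25; 26; 29];
  [:: 2; 3; 4; 5; 7; 8; 9; 11; 13; 14; 15; 16; 18; 19; 20; 21; 23; 24; 25; 26; 27; 28; 30];
  [:: 0; 2; 3; 4; 5; 7; 8; 11; 12; 14; 15; 16; 18; 19; 20; 21; 22; 23; 24; 25; 26; 27; 28; 29];
  [:: 1; 3; 4; 5; 6; 7; 8; 12; 13; 14; 15; 16; 19; 21; 22; 23; 24; 25; 26; 28; 29; 30];
  [:: 0; 2; 4; 5; 6; 7; 8; 9; 11; 12; 13; 15; 18; 19; 20; 21; 23; 24; 26; 27; 28; 29];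
  [:: 0; 3; 5; 6; 7; 8; 11; 12; 13; 14; 15; 16; 18; 19; 20; 22; 23; 24; 25; 26; 27; 28; 29; 30];
  [:: 0; 1; 2; 4; 6; 7; 8; 9; 11; 13; 14; 15; 16; 18; 20; 21; 22; 23; 24; 25; 27; 28; 29; 30];
  [:: 1; 2; 3; 5; 8; 9; 11; 12; 13; 14; 15; 16; 18; 19; 20; 21; 22; 23; 24; 25; 26; 27; 28; 30];
  [:: 0; 1; 3; 4; 6; 9; 11; 12; 13; 14; 15; 16; 18; 19; 21; 22; 23; 25; 26; 27; 28; 29; 30];
  [:: 0; 1; 2; 3; 4; 5; 7; 9; 12; 13; 14; 15; 16; 19; 20; 21; 22; 23; 24; 25; 26; 27; 29; 30];
  [:: 0; 2; 3; 4; 5; 6; 8; 11; 12; 13; 14; 16; 18; 19; 20; 21; 22; 24; 25; 26; 27; 30];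
  [:: 0; 1; 3; 4; 5; 6; 9; 11; 12; 13; 14; 15; 19; 21; 22; 23; 24; 25; 26; 27; 29; 30];
  [:: 0; 1; 2; 4; 5; 6; 7; 8; 12; 14; 15; 16; 18; 19; 20; 21; 22; 23; 24; 26; 27; 28; 29; 30];
  [:: 0; 1; 2; 3; 4; 5; 6; 7; 9; 11; 13; 14; 15; 16; 18; 19; 20; 22; 23; 24; 25; 26; 28];
  [:: 0; 1; 2; 5; 7; 9; 12; 14; 15; 16; 18; 19; 20; 21; 22; 23; 24; 25; 26; 27; 28; 29; 30];
  [:: 0; 1; 2; 3; 4; 5; 6; 7; 8; 11; 13; 15; 18; 20; 21; 22; 23; 25; 27; 28; 30];
  [:: 0; 1; 2; 3; 4; 5; 6; 7; 8; 9; 11; 12; 16; 18; 19; 20; 21; 22; 23; 25; 27; 28; 29; 30]].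

Definition infinite_row : seq nat :=
  [:: 2; 3; 4; 6; 7; 8; 9; 11; 12; 13; 15; 16; 17; 19; 20; 21; 22; 23; 24; 25; 28; 29; 30].

Definition arc734 : seq triple :=
  [seq (1, a, b)%N | a <- iota 0 31, b <- nth [::] affine_rows a] ++
  [seq (0, 1, b)%N | b <- infinite_row] ++ [:: (0, 0, 1)%N].

Lemma arc734_normalized : {subset arc734 <= proj_triples 31}.
Proof. by apply/allP; vm_compute. Qed.

Lemma arc734_uniq : uniq arc734.
Proof. by vm_compute. Qed.

Lemma size_arc734 : size arc734 = 734%N.
Proof. by vm_compute. Qed.

Lemma arc734_line_count t : t \in proj_triples 31 -> (line_count 31 arc734 t <= 25)%N.
Proof. by move: t; apply/allP; vm_compute. Qed.

Lemma arc734_line_z0 : line_count 31 arc734 (0, 0, 1)%N = 25%N.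
Proof. by vm_compute. Qed.

Theorem mainTheorem16 :
  exists B : {set 'rV['F_31]_3}, is_arc 734 25 B.
Proof.
have F31_prime : prime 31 by [].
exists (point_set 31 arc734).
exact (arc_criterion F31_prime arc734_normalized arc734_uniq size_arc734
                     arc734_line_count arc734_line_z0).
Qed.
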